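(* Assume $\ell\ll1$. There is an absolute constant $c>0$ and, for each $q>0$, a constant $c_q$ such that for $N$ sufficiently large, for all $\mathbf x\in\Lambda^N$, all $i$ and all $j\ne j'$ (both $\ne i$): $\|\tilde\chi_{ij}\tilde\chi_{ij'}F_{ij}^q\|_\infty\le e^{-cq/\ell^\varepsilon}$, and for every fixed $i$, $\sum_{j\ne i}\tilde\chi_{ij}F_{ij}^q\le c_q$.
   Context: $\Lambda=\mathbb R^3/\mathbb Z^3$ with torus distance $|x|$. $\ell=\ell(N)$ a length scale; $A\ll B$ means $A/B=O(N^{-\alpha})$ for some $\alpha>0$. $h(x)=\exp(-\sqrt{|x|^2+\ell^2}/\ell)$; fixed $0<\varepsilon<1/10$; $F(u)=e^{-u/\ell^\varepsilon}$; for $\mathbf x\in\Lambda^N$ and $i\ne j$, $F_{ij}=F\big(\sum_{k\ne i,j}[h(x_k-x_i)+h(x_k-x_j)]\big)$ and $\tilde\chi_{ij}=1(|x_i-x_j|\le\ell)$. *)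

From Stdlib Require Import Reals Lra List Arith Bool.
Open Scope R_scope.

(* Points of the torus Lambda = R^3/Z^3 are represented by real triples
   (any representative); all quantities below are Z^3-periodic. *)
Definition pt := (R * R * R)%type.

Definition psub (a b : pt) : pt :=
  let '(a1, a2, a3) := a in let '(b1, b2, b3) := b in (a1 - b1, a2 - b2, a3 - b3).

Definition dZ (t : R) : R :=
  let f := t - IZR (Int_part t) in Rmin f (1 - f).

(* torus norm |x| = min_{n in Z^3} |x - n| (the minimum separates coordinatewise) *)
Definition tnorm (x : pt) : R :=
  let '(x1, x2, x3) := x in sqrt (dZ x1 ^ 2 + dZ x2 ^ 2 + dZ x3 ^ 2).

Definition h (l : R) (x : pt) : R := exp (- sqrt (tnorm x ^ 2 + l ^ 2) / l).

Definition F (l eps u : R) : R := exp (- u / Rpower l eps).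

Definition sum_over (N : nat) (P : nat -> bool) (f : nat -> R) : R :=
  fold_right Rplus 0 (map f (filter P (seq 0 N))).

Definition Fij (l eps : R) (N : nat) (x : nat -> pt) (i j : nat) : R :=
  F l eps (sum_over N (fun k => negb (Nat.eqb k i) && negb (Nat.eqb k j))
             (fun k => h l (psub (x k) (x i)) + h l (psub (x k) (x j)))).

Definition chi (l : R) (x : nat -> pt) (i j : nat) : R :=
  if Rle_dec (tnorm (psub (x i) (x j))) l then 1 else 0.

(* With c = e^{-2}: whenever |x_i - x_k| <= l we have h(x_k - x_i) >= e^{-2},
   so the argument of F_ij is at least e^{-2} times the number of neighbours
   of i other than i, j.  A second neighbour j' therefore forces
   F_ij^q <= exp(-q e^{-2} / l^eps).  If i has m neighbours in total, each of
   the m terms of the sum is at most exp(-b (m - 1)) with b = q e^{-2}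
   (using l^eps <= 1), and m e^{-b (m - 1)} <= e^b / b because b m <= e^{b m}. *)

From Stdlib Require Import Reals List Arith.
From Stdlib Require Import Lra Bool ZArith Lia.
Open Scope R_scope.

Lemma exp_le (a b : R) : a <= b -> exp a <= exp b.
Proof. intros [H|H]; [left; now apply exp_increasing|subst; lra]. Qed.

Definition fsum (P : nat -> bool) (f : nat -> R) (s : list nat) : R :=
  fold_right Rplus 0 (map f (filter P s)).

Lemma sum_over_fsum N P f : sum_over N P f = fsum P f (seq 0 N).
Proof. reflexivity. Qed.

Lemma fsum_le P f g s :
  (forall k, In k s -> P k = true -> f k <= g k) -> fsum P f s <= fsum P g s.
Proof.
  induction s as [|a s IH]; intros H; unfold fsum; simpl; [lra|].
  destruct (P a) eqn:Pa; simpl.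
  - apply Rplus_le_compat; [apply H; simpl; auto|].
    apply IH; intros; apply H; simpl; auto.
  - apply IH; intros; apply H; simpl; auto.
Qed.

Lemma fsum_nonneg P f s :
  (forall k, In k s -> P k = true -> 0 <= f k) -> 0 <= fsum P f s.
Proof.
  intros H.
  replace 0 with (fsum P (fun _ => 0) s); [now apply fsum_le|].
  unfold fsum; clear H; induction s as [|a s IH]; simpl; auto.
  destruct (P a); simpl; rewrite ?IH; lra.
Qed.

Lemma fsum_mulr P f c s : fsum P (fun k => f k * c) s = fsum P f s * c.
Proof.
  unfold fsum; induction s as [|a s IH]; simpl; [lra|].
  destruct (P a); simpl; rewrite ?IH; lra.
Qed.

Lemma fsum_ext_in P Q f s :
  (forall k, In k s -> P k = Q k) -> fsum P f s = fsum Q f s.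
Proof.
  unfold fsum; induction s as [|a s IH]; intros H; simpl; auto.
  rewrite H by (simpl; auto).
  destruct (Q a); simpl; rewrite IH; auto; intros; apply H; simpl; auto.
Qed.

Lemma fsum_term_le P f s j :
  (forall k, In k s -> P k = true -> 0 <= f k) -> In j s -> P j = true ->
  f j <= fsum P f s.
Proof.
  induction s as [|a s IH]; intros H Hj Pj; [contradiction|].
  destruct Hj as [<-|Hj]; unfold fsum; simpl.
  - rewrite Pj; simpl.
    assert (0 <= fsum P f s) by (apply fsum_nonneg; intros; apply H; simpl; auto).
    unfold fsum in *; lra.
  - assert (f j <= fsum P f s) by (apply IH; auto; intros; apply H; simpl; auto).
    unfold fsum in *; destruct (P a) eqn:Pa; simpl; auto.
    assert (0 <= f a) by (apply H; simpl; auto); lra.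
Qed.

Lemma fsum_remove P f s j :
  NoDup s -> In j s -> P j = true ->
  fsum P f s = fsum (fun k => P k && negb (Nat.eqb k j)) f s + f j.
Proof.
  induction s as [|a s IH]; intros ND Hj Pj; [contradiction|].
  inversion ND as [|? ? Ha Hs]; subst; destruct Hj as [<-|Hj].
  - unfold fsum at 1 2; simpl; rewrite Pj, Nat.eqb_refl; simpl.
    change (f a + fsum P f s = fsum (fun k => P k && negb (Nat.eqb k a)) f s + f a).
    rewrite (fsum_ext_in P (fun k => P k && negb (Nat.eqb k a))); [lra|].
    intros k Hk; destruct (Nat.eqb_spec k a); subst; [contradiction|].
    now rewrite andb_true_r.
  - unfold fsum; simpl.
    destruct (Nat.eqb_spec a j) as [->|Haj]; [contradiction|].
    rewrite andb_true_r.
    specialize (IH Hs Hj Pj); unfold fsum in IH.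
    destruct (P a); simpl; rewrite IH; lra.
Qed.

Lemma dZ_opp t : dZ (- t) = dZ t.
Proof.
  unfold dZ.
  destruct (base_Int_part t) as [A B]; destruct (base_Int_part (- t)) as [C D].
  set (n := Int_part t) in *; set (n' := Int_part (- t)) in *.
  assert (Hsum : (n + n' = 0 \/ n + n' = -1)%Z).
  { assert (-2 < IZR (n + n')) by (rewrite plus_IZR; lra).
    assert (IZR (n + n') <= 0) by (rewrite plus_IZR; lra).
    apply lt_IZR in H; apply le_IZR in H0; lia. }
  destruct Hsum as [E|E]; apply (f_equal IZR) in E; rewrite plus_IZR in E.
  - now replace (- t - IZR n') with (t - IZR n) by lra.
  - replace (- t - IZR n') with (1 - (t - IZR n)) by (simpl in E; lra).
    replace (1 - (1 - (t - IZR n))) with (t - IZR n) by lra.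
    apply Rmin_comm.
Qed.

Lemma tnorm_psub_sym a b : tnorm (psub a b) = tnorm (psub b a).
Proof.
  destruct a as [[a1 a2] a3]; destruct b as [[b1 b2] b3]; simpl.
  rewrite <- (dZ_opp (a1 - b1)), <- (dZ_opp (a2 - b2)), <- (dZ_opp (a3 - b3)).
  now rewrite !Ropp_minus_distr.
Qed.

Lemma tnorm_nonneg p : 0 <= tnorm p.
Proof. destruct p as [[? ?] ?]; apply sqrt_pos. Qed.

Lemma h_nonneg l p : 0 <= h l p.
Proof. left; apply exp_pos. Qed.

Lemma h_ge_exp_m2 l p : 0 < l -> tnorm p <= l -> exp (-2) <= h l p.
Proof.
  intros Hl Hp; unfold h; apply exp_le.
  assert (Hsqrt : sqrt (tnorm p ^ 2 + l ^ 2) <= 2 * l).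
  { rewrite <- (sqrt_pow2 (2 * l)) by lra; apply sqrt_le_1_alt.
    pose proof (tnorm_nonneg p); nra. }
  apply (Rmult_le_reg_r l); auto.
  unfold Rdiv; rewrite Rmult_assoc, Rinv_l by lra; lra.
Qed.

Lemma chi_cases l x i j :
  chi l x i j = 0 \/ (chi l x i j = 1 /\ tnorm (psub (x i) (x j)) <= l).
Proof. unfold chi; destruct Rle_dec; auto. Qed.

Lemma chi_nonneg l x i j : 0 <= chi l x i j.
Proof. destruct (chi_cases l x i j) as [->|[-> _]]; lra. Qed.

Lemma chi_mul_exp_m2_le_h l x i k :
  0 < l -> chi l x i k * exp (-2) <= h l (psub (x k) (x i)).
Proof.
  intros Hl; destruct (chi_cases l x i k) as [->|[-> Hk]].
  - rewrite Rmult_0_l; apply h_nonneg.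
  - rewrite Rmult_1_l; apply h_ge_exp_m2; [|rewrite tnorm_psub_sym]; auto.
Qed.

Lemma Rpower_F l eps u q : Rpower (F l eps u) q = exp (- q * u / Rpower l eps).
Proof. unfold Rpower at 1, F; rewrite ln_exp; f_equal; unfold Rdiv; ring. Qed.

Lemma Rpower_pos t a : 0 < Rpower t a.
Proof. apply exp_pos. Qed.

Lemma Rpower_le_1 l eps : 0 < l <= 1 -> 0 < eps -> Rpower l eps <= 1.
Proof.
  intros [Hl0 Hl1] He; unfold Rpower; rewrite <- exp_0; apply exp_le.
  assert (ln l <= 0).
  { rewrite <- ln_1; destruct Hl1 as [Hlt| ->]; [left; now apply ln_increasing|lra]. }
  nra.
Qed.

Lemma neg_div_le_neg (a P : R) : 0 <= a -> 0 < P <= 1 -> - a / P <= - a.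
Proof.
  intros Ha [HP0 HP1].
  assert (a <= a / P).
  { unfold Rdiv; rewrite <- (Rmult_1_r a) at 1; apply Rmult_le_compat_l; auto.
    rewrite <- Rinv_1; apply Rinv_le_contravar; lra. }
  unfold Rdiv in *; rewrite Ropp_mult_distr_l_reverse; lra.
Qed.

Lemma Rpower_neg_le_inv (K a t : R) :
  1 <= K -> 0 < a -> exp (ln K / a) < t -> Rpower t (- a) <= / K.
Proof.
  intros HK Ha Ht.
  assert (Hln : ln K / a < ln t) by
    (rewrite <- (ln_exp (ln K / a)); apply ln_increasing; auto; apply exp_pos).
  unfold Rpower; rewrite <- (exp_ln K), <- exp_Ropp by lra; apply exp_le.
  apply (Rmult_lt_compat_l a) in Hln; auto.
  field_simplify in Hln; lra.
Qed.

Lemma eventually_le_1_of_power_decay (ell : nat -> R) :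
  (exists alpha C : R, exists N1 : nat, 0 < alpha /\
     forall N : nat, (N1 <= N)%nat -> ell N <= C * Rpower (INR N) (- alpha)) ->
  exists N0 : nat, forall N, (N0 <= N)%nat -> ell N <= 1.
Proof.
  intros (alpha & C & N1 & Ha & Hdecay).
  set (K := Rmax C 1).
  assert (HK1 : 1 <= K) by apply Rmax_r.
  assert (HCK : C <= K) by apply Rmax_l.
  set (T := exp (ln K / alpha)).
  assert (HT0 : 0 < T) by apply exp_pos.
  destruct (archimed T) as [HT _].
  assert (Hup : (0 <= up T)%Z) by (apply le_IZR; lra).
  exists (Nat.max N1 (Z.to_nat (up T))); intros N HN.
  assert (HTN : T < INR N).
  { apply Rlt_le_trans with (IZR (up T)); auto.
    rewrite <- (Z2Nat.id (up T)), <- INR_IZR_INZ by auto; apply le_INR; lia. }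
  pose proof (Rpower_neg_le_inv K alpha (INR N) HK1 Ha HTN) as Hpow.
  pose proof (Rpower_pos (INR N) (- alpha)) as Hpos.
  assert (K * / K = 1) by (field; lra).
  eapply Rle_trans; [apply Hdecay; lia|].
  destruct (Rle_lt_dec C 0); nra.
Qed.

Lemma mul_exp_neg_le (b m : R) :
  0 < b -> 0 <= m -> m * exp (- b * (m - 1)) <= exp b / b.
Proof.
  intros Hb Hm.
  replace (- b * (m - 1)) with (b + - (b * m)) by ring.
  rewrite exp_plus, exp_Ropp.
  pose proof (exp_ineq1_le (b * m)) as Hbm.
  pose proof (exp_pos b); pose proof (exp_pos (b * m)).
  assert (Hkey : m * / exp (b * m) <= / b).
  { apply (Rmult_le_reg_l (b * exp (b * m))); [nra|].
    field_simplify; [nra|lra|lra]. }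
  replace (m * (exp b * / exp (b * m))) with (m * / exp (b * m) * exp b) by ring.
  unfold Rdiv; rewrite (Rmult_comm (exp b)).
  apply Rmult_le_compat_r; lra.
Qed.

Section Configuration.

Variables (l eps : R) (N : nat) (x : nat -> pt).
Hypothesis l_pos : 0 < l.

Definition interaction (i j : nat) : R :=
  sum_over N (fun k => negb (Nat.eqb k i) && negb (Nat.eqb k j))
    (fun k => h l (psub (x k) (x i)) + h l (psub (x k) (x j))).

Lemma Fij_interaction i j : Fij l eps N x i j = F l eps (interaction i j).
Proof. reflexivity. Qed.

Lemma interaction_ge_neighbours i j :
  exp (-2) * sum_over N (fun k => negb (Nat.eqb k i) && negb (Nat.eqb k j)) (chi l x i)
    <= interaction i j.
Proof.
  rewrite Rmult_comm, sum_over_fsum, <- fsum_mulr; apply fsum_le; intros k _ _.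
  pose proof (chi_mul_exp_m2_le_h l x i k l_pos).
  pose proof (h_nonneg l (psub (x k) (x j))); lra.
Qed.

Lemma Rpower_Fij_le a i j q :
  0 < q -> a <= interaction i j ->
  Rpower (Fij l eps N x i j) q <= exp (- q * a / Rpower l eps).
Proof.
  intros Hq Ha; rewrite Fij_interaction, Rpower_F; apply exp_le.
  pose proof (Rpower_pos l eps).
  unfold Rdiv; apply Rmult_le_compat_r; [left; apply Rinv_0_lt_compat|]; nra.
Qed.

Lemma chi_pair_Rpower_Fij_le i j j' q :
  0 < q -> (j' < N)%nat -> j' <> i -> j <> j' ->
  chi l x i j * chi l x i j' * Rpower (Fij l eps N x i j) q
    <= exp (- exp (-2) * q / Rpower l eps).
Proof.
  intros Hq Hj' Hj'i Hjj'.
  destruct (chi_cases l x i j) as [->|[-> _]];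
    [rewrite !Rmult_0_l; left; apply exp_pos|].
  destruct (chi_cases l x i j') as [Hc|[Hc _]];
    [rewrite Hc, Rmult_0_r, Rmult_0_l; left; apply exp_pos|].
  rewrite Hc, !Rmult_1_l.
  replace (- exp (-2) * q) with (- q * exp (-2)) by ring.
  apply Rpower_Fij_le; auto.
  eapply Rle_trans; [|apply interaction_ge_neighbours].
  rewrite <- (Rmult_1_r (exp (-2))) at 1; apply Rmult_le_compat_l; [left; apply exp_pos|].
  rewrite <- Hc, sum_over_fsum; apply fsum_term_le.
  - intros; apply chi_nonneg.
  - apply in_seq; lia.
  - apply Nat.eqb_neq in Hj'i; apply not_eq_sym, Nat.eqb_neq in Hjj'.
    now rewrite Hj'i, Hjj'.
Qed.

Hypothesis l_le_1 : l <= 1.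
Hypothesis eps_pos : 0 < eps.

Lemma sum_chi_Rpower_Fij_le i q :
  0 < q ->
  sum_over N (fun j => negb (Nat.eqb j i))
    (fun j => chi l x i j * Rpower (Fij l eps N x i j) q)
    <= exp (q * exp (-2)) / (q * exp (-2)).
Proof.
  intros Hq.
  set (m := sum_over N (fun j => negb (Nat.eqb j i)) (chi l x i)).
  set (b := q * exp (-2)).
  assert (Hb : 0 < b) by (unfold b; pose proof (exp_pos (-2)); nra).
  assert (Hm : 0 <= m) by (apply fsum_nonneg; intros; apply chi_nonneg).
  eapply Rle_trans; [|apply (mul_exp_neg_le b m Hb Hm)].
  rewrite sum_over_fsum; unfold m; rewrite sum_over_fsum, <- fsum_mulr.
  apply fsum_le; intros k Hk Pk.
  destruct (chi_cases l x i k) as [->|[Hc _]]; [lra|].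
  rewrite Hc, !Rmult_1_l.
  assert (Hm1 : m - 1 =
    sum_over N (fun k' => negb (Nat.eqb k' i) && negb (Nat.eqb k' k)) (chi l x i)).
  { unfold m; rewrite !sum_over_fsum, (fsum_remove _ _ _ k); auto using seq_NoDup.
    rewrite Hc; ring. }
  assert (Hm1_nonneg : 0 <= m - 1) by (rewrite Hm1; apply fsum_nonneg; intros; apply chi_nonneg).
  eapply Rle_trans.
  { apply (Rpower_Fij_le (exp (-2) * (m - 1))); auto.
    rewrite Hm1; apply interaction_ge_neighbours. }
  apply exp_le.
  change (fsum (fun j => negb (Nat.eqb j i)) (chi l x i) (seq 0 N)) with m.
  replace (- b * (m - 1)) with (- (q * (exp (-2) * (m - 1)))) by (unfold b; ring).
  rewrite Ropp_mult_distr_l_reverse; apply neg_div_le_neg.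
  - pose proof (exp_pos (-2)); apply Rmult_le_pos; [lra|nra].
  - split; [apply Rpower_pos|apply Rpower_le_1; auto].
Qed.

End Configuration.

Theorem lemmaB1 :
  exists c : R, 0 < c /\
  forall (eps : R) (ell : nat -> R),
    0 < eps < 1 / 10 ->
    (forall N, 0 < ell N) ->
    (* ell << 1 : ell(N) = O(N^{-alpha}) for some alpha > 0 *)
    (exists alpha C : R, exists N1 : nat, 0 < alpha /\
       forall N : nat, (N1 <= N)%nat -> ell N <= C * Rpower (INR N) (- alpha)) ->
    forall q : R, 0 < q ->
    exists cq : R, exists N0 : nat,
      forall N : nat, (N0 <= N)%nat ->
      forall x : nat -> pt,
      (forall i j j' : nat, (i < N)%nat -> (j < N)%nat -> (j' < N)%nat ->
         j <> i -> j' <> i -> j <> j' ->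
         chi (ell N) x i j * chi (ell N) x i j' * Rpower (Fij (ell N) eps N x i j) q
           <= exp (- c * q / Rpower (ell N) eps)) /\
      (forall i : nat, (i < N)%nat ->
         sum_over N (fun j => negb (Nat.eqb j i))
           (fun j => chi (ell N) x i j * Rpower (Fij (ell N) eps N x i j) q) <= cq).
Proof.
  exists (exp (-2)); split; [apply exp_pos|].
  intros eps ell Heps Hell Hdecay q Hq.
  destruct (eventually_le_1_of_power_decay ell Hdecay) as [N0 HN0].
  exists (exp (q * exp (-2)) / (q * exp (-2))), N0.
  intros N HN x; split.
  - intros i j j' _ _ Hj' _ Hj'i Hjj'.
    now apply chi_pair_Rpower_Fij_le.
  - intros i _.
    apply sum_chi_Rpower_Fij_le; auto; lra.
Qed.
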